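(* Consider the ODE system $$\frac{du}{dt}=\frac{a_1u}{1+fv}-b_1u^2-c_1uv,\qquad \frac{dv}{dt}=a_2v-b_2v^2-c_2uv,$$ with positive parameters $a_1,a_2,b_1,b_2,c_1,c_2$. For every value of $f\ge0$, the system has no periodic orbits in the nonnegative quadrant $\{u\ge0,v\ge0\}$.
   Context: The state space is the biologically feasible nonnegative quadrant of population densities. *)

From Stdlib Require Import Reals.
From Coquelicot Require Import Coquelicot.
Open Scope R_scope.

Definition rhs_u (a1 b1 c1 f u v : R) : R :=
  a1 * u / (1 + f * v) - b1 * u ^ 2 - c1 * u * v.
Definition rhs_v (a2 b2 c2 u v : R) : R :=
  a2 * v - b2 * v ^ 2 - c2 * u * v.

Definition is_solution (a1 a2 b1 b2 c1 c2 f : R) (u v : R -> R) : Prop :=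
  forall t, is_derive u t (rhs_u a1 b1 c1 f (u t) (v t)) /\
            is_derive v t (rhs_v a2 b2 c2 (u t) (v t)).

Definition in_quadrant (u v : R -> R) : Prop :=
  forall t, 0 <= u t /\ 0 <= v t.

Definition is_periodic_orbit (a1 a2 b1 b2 c1 c2 f : R) (u v : R -> R) : Prop :=
  is_solution a1 a2 b1 b2 c1 c2 f u v /\
  (exists T, 0 < T /\ forall t, u (t + T) = u t /\ v (t + T) = v t) /\
  (exists t1 t2, u t1 <> u t2 \/ v t1 <> v t2).

(* The system is competitive: along a solution the velocity (x, y) = (u', v') solves a linear
   system x' = A x + B y, y' = C x + D y whose off-diagonal coefficients B = d(u')/dv and
   C = d(v')/du are nonpositive.  For such systems the quadrants {x > 0 > y} and {x < 0 < y} are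
   forward invariant, and on a periodic orbit u cannot be eventually strictly monotone; hence
   u' v' >= 0 along the orbit.  At a maximum of v we have v' = 0, so u' v' attains its minimum
   there and its derivative C u'^2 = -c2 v u'^2 vanishes: if max v > 0 the velocity is zero at
   that point (if max v = 0, v is identically 0 and a maximum of u will do).  The coefficients
   being bounded, Gronwall's inequality for u'^2 + v'^2 then forces the velocity to vanish
   identically, so the orbit is a single point. *)

From Stdlib Require Import Reals Lra Classical.
From Coquelicot Require Import Coquelicot.
Open Scope R_scope.

Lemma is_derive_continuity_pt (f : R -> R) (t d : R) :
  is_derive f t d -> continuity_pt f t.
Proof.
  intros Hf. apply derivable_continuous_pt. exists d. now apply is_derive_Reals.
Qed.

Lemma is_derive_Ropp (f : R -> R) (t d : R) :
  is_derive f t d -> is_derive (fun s => - f s) t (- d).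
Proof. exact (is_derive_opp f t d). Qed.

Lemma is_derive_locally_pos (f : R -> R) (t d : R) :
  is_derive f t d -> 0 < f t -> locally t (fun s => 0 < f s).
Proof.
  intros Hf Hpos.
  apply (ex_derive_continuous f t (ex_intro _ d Hf) (fun y => 0 < y)).
  now apply open_gt.
Qed.

Lemma is_derive_max_eq0 (f : R -> R) (t d : R) :
  is_derive f t d -> (forall s, f s <= f t) -> d = 0.
Proof.
  intros Hf Hmax. apply is_derive_Reals in Hf.
  exact (deriv_maximum f (t - 1) (t + 1) t (exist _ d Hf)
           ltac:(lra) ltac:(lra) (fun s _ _ => Hmax s)).
Qed.

Lemma is_derive_min_eq0 (f : R -> R) (t d : R) :
  is_derive f t d -> (forall s, f t <= f s) -> d = 0.
Proof.
  intros Hf Hmin. apply is_derive_Reals in Hf.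
  exact (deriv_minimum f (t - 1) (t + 1) t (exist _ d Hf)
           ltac:(lra) ltac:(lra) (fun s _ _ => Hmin s)).
Qed.

Lemma derive_nonneg_le (f df : R -> R) (a b : R) :
  (forall t, is_derive f t (df t)) -> a <= b ->
  (forall c, a < c < b -> 0 <= df c) -> f a <= f b.
Proof.
  intros Hf Hab Hdf. destruct (Req_dec a b) as [<-|Hne]; [lra|].
  destruct (MVT_cor2 f df a b) as [c [Hmvt Hc]]; [lra|intros c _; now apply is_derive_Reals|].
  specialize (Hdf c Hc). nra.
Qed.

Lemma derive_pos_lt (f df : R -> R) (a b : R) :
  (forall t, is_derive f t (df t)) -> a < b ->
  (forall c, a < c < b -> 0 < df c) -> f a < f b.
Proof.
  intros Hf Hab Hdf.
  destruct (MVT_cor2 f df a b) as [c [Hmvt Hc]]; [lra|intros c _; now apply is_derive_Reals|].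
  specialize (Hdf c Hc). nra.
Qed.

Lemma derive_zero_const (f : R -> R) :
  (forall t, is_derive f t 0) -> forall a b, f a = f b.
Proof.
  assert (Hmono : forall g : R -> R, (forall t, is_derive g t 0) ->
            forall a b, a <= b -> g a <= g b).
  { intros g Hg a b Hab.
    apply (derive_nonneg_le g (fun _ => 0)); [exact Hg|exact Hab|intros; lra]. }
  intros Hf.
  assert (Hopp : forall t, is_derive (fun s => - f s) t 0)
    by (intros t; rewrite <- Ropp_0; exact (is_derive_Ropp f t 0 (Hf t))).
  intros a b. destruct (Rle_or_lt a b) as [Hab|Hba].
  - pose proof (Hmono _ Hf a b Hab). pose proof (Hmono _ Hopp a b Hab). lra.
  - pose proof (Hmono _ Hf b a (Rlt_le _ _ Hba)).
    pose proof (Hmono _ Hopp b a (Rlt_le _ _ Hba)). lra.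
Qed.

Lemma periodic_IZR (f : R -> R) (T : R) :
  (forall t, f (t + T) = f t) -> forall (n : Z) t, f (t + IZR n * T) = f t.
Proof.
  intros Hper n. induction n as [|n IH|n IH] using Z.peano_ind; intros t.
  - now rewrite Rmult_0_l, Rplus_0_r.
  - rewrite succ_IZR, <- (IH t), <- (Hper (t + IZR n * T)). f_equal. ring.
  - rewrite <- Z.sub_1_r, minus_IZR, <- (Hper (t + (IZR n - 1) * T)), <- (IH t). f_equal. ring.
Qed.

Lemma periodic_attains_max (f : R -> R) (T : R) :
  0 < T -> (forall t, f (t + T) = f t) -> (forall t, continuity_pt f t) ->
  exists tm, forall t, f t <= f tm.
Proof.
  intros HT Hper Hcont.
  destruct (continuity_ab_maj f 0 T (Rlt_le _ _ HT) (fun c _ => Hcont c)) as [tm [Hmax _]].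
  exists tm. intros t.
  destruct (base_Int_part (t / T)) as [Hlo Hhi].
  set (n := Int_part (t / T)) in *.
  assert (Ht : t / T * T = t) by (field; lra).
  rewrite <- (periodic_IZR f T Hper (- n) t), opp_IZR.
  apply Hmax. split; nra.
Qed.

Lemma periodic_derive_not_eventually_pos (f df : R -> R) (T s0 : R) :
  0 < T -> (forall t, f (t + T) = f t) -> (forall t, is_derive f t (df t)) ->
  ~ (forall s, s0 <= s -> 0 < df s).
Proof.
  intros HT Hper Hf Hpos.
  pose proof (derive_pos_lt f df s0 (s0 + T) Hf ltac:(lra) (fun c Hc => Hpos c ltac:(lra))) as Hlt.
  rewrite Hper in Hlt. lra.
Qed.

Lemma continuous_induction (P : R -> Prop) (t0 : R) :
  (forall s, t0 <= s -> (forall r, t0 <= r < s -> P r) -> P s) ->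
  (forall s, t0 <= s -> P s -> locally s P) ->
  forall t, t0 <= t -> P t.
Proof.
  intros Hclosed Hopen t Ht. apply NNPP. intros HPt.
  set (E := fun s => t0 <= s <= t /\ forall r, t0 <= r < s -> P r).
  assert (HE0 : E t0) by (split; [lra|intros r Hr; lra]).
  destruct (completeness E) as [m [Hub Hlub]];
    [exists t; intros s Hs; apply Hs|exists t0; exact HE0|].
  assert (Hm : t0 <= m <= t) by (split; [apply Hub, HE0|apply Hlub; intros s Hs; apply Hs]).
  assert (Hbefore : forall r, t0 <= r < m -> P r).
  { intros r Hr. apply NNPP. intros HPr.
    assert (m <= r); [|lra].
    apply Hlub. intros s [_ Hs]. destruct (Rle_or_lt s r); [assumption|].
    exfalso. apply HPr, Hs. lra. }
  assert (HPm : P m) by (apply Hclosed; [lra|exact Hbefore]).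
  assert (Hmt : m < t) by (destruct (Req_dec m t) as [->|]; [contradiction|lra]).
  destruct (Hopen m (proj1 Hm) HPm) as [eps Heps].
  set (s := Rmin (m + eps / 2) t).
  assert (Hs : m < s <= m + eps / 2).
  { unfold s. split; [apply Rmin_glb_lt; pose proof (cond_pos eps); lra|apply Rmin_l]. }
  assert (HEs : E s).
  { split; [split; [lra|apply Rmin_r]|].
    intros r Hr. destruct (Rlt_or_le r m); [apply Hbefore; lra|].
    apply Heps. apply Rabs_lt_between'. pose proof (cond_pos eps). lra. }
  pose proof (Hub s HEs). lra.
Qed.

Lemma positivity_invariant (p q dp dq : R -> R) (t0 : R) :
  (forall t, is_derive p t (dp t)) -> (forall t, is_derive q t (dq t)) ->
  (forall t, 0 < p t -> 0 < q t -> 0 <= dp t /\ 0 <= dq t) ->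
  0 < p t0 -> 0 < q t0 -> forall t, t0 <= t -> 0 < p t /\ 0 < q t.
Proof.
  intros Hp Hq Hmono Hp0 Hq0.
  apply continuous_induction.
  - intros s Hs Hbefore.
    assert (Hinc : forall c, t0 < c < s -> 0 <= dp c /\ 0 <= dq c)
      by (intros c Hc; apply Hmono; apply Hbefore; lra).
    pose proof (derive_nonneg_le p dp t0 s Hp Hs (fun c Hc => proj1 (Hinc c Hc))).
    pose proof (derive_nonneg_le q dq t0 s Hq Hs (fun c Hc => proj2 (Hinc c Hc))).
    lra.
  - intros s _ [Hps Hqs].
    exact (filter_and _ _ (is_derive_locally_pos p s _ (Hp s) Hps)
                          (is_derive_locally_pos q s _ (Hq s) Hqs)).
Qed.

Lemma is_derive_mul_exp (f : R -> R) (t df K : R) :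
  is_derive f t df ->
  is_derive (fun s => f s * exp (K * s)) t ((df + K * f t) * exp (K * t)).
Proof.
  intros Hf. auto_derive.
  - now exists df.
  - replace (Derive (fun s => f s) t) with df by (symmetry; now apply is_derive_unique).
    ring.
Qed.

Lemma competitive_quadrant_invariant (x y A B C D : R -> R) (K t0 : R) :
  (forall t, is_derive x t (A t * x t + B t * y t)) ->
  (forall t, is_derive y t (C t * x t + D t * y t)) ->
  (forall t, B t <= 0) -> (forall t, C t <= 0) ->
  (forall t, - K <= A t) -> (forall t, - K <= D t) ->
  0 < x t0 -> y t0 < 0 -> forall t, t0 <= t -> 0 < x t /\ y t < 0.
Proof.
  intros Hx Hy HB HC HA HD Hx0 Hy0 t Ht.
  assert (Hexp : forall s, 0 < exp (K * s)) by (intros; apply exp_pos).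
  (* While x e^(Kt) and -y e^(Kt) are both positive, their derivatives are nonnegative. *)
  assert (Hxy : 0 < x t * exp (K * t) /\ 0 < - y t * exp (K * t)).
  { apply (positivity_invariant _ _ _ _ t0
             (fun s => is_derive_mul_exp x s _ K (Hx s))
             (fun s => is_derive_mul_exp (fun r => - y r) s _ K (is_derive_Ropp y s _ (Hy s)))).
    - intros s Hxs Hys.
      assert (0 < x s) by (pose proof (Hexp s); nra).
      assert (y s < 0) by (pose proof (Hexp s); nra).
      specialize (HA s). specialize (HB s). specialize (HC s). specialize (HD s).
      split; apply Rmult_le_pos; try (left; apply Hexp).
      + assert (0 <= (A s + K) * x s) by (apply Rmult_le_pos; lra). nra.
      + assert (0 <= (D s + K) * - y s) by (apply Rmult_le_pos; lra). nra.
    - pose proof (Hexp t0). nra.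
    - pose proof (Hexp t0). nra.
    - exact Ht. }
  pose proof (Hexp t). split; nra.
Qed.

Lemma competitive_sign_persistent (x y A B C D : R -> R) (K t0 : R) :
  (forall t, is_derive x t (A t * x t + B t * y t)) ->
  (forall t, is_derive y t (C t * x t + D t * y t)) ->
  (forall t, B t <= 0) -> (forall t, C t <= 0) ->
  (forall t, - K <= A t) -> (forall t, - K <= D t) ->
  x t0 * y t0 < 0 -> forall t, t0 <= t -> 0 < x t0 * x t.
Proof.
  intros Hx Hy HB HC HA HD Hxy0 t Ht.
  destruct (Rlt_or_le 0 (x t0)) as [Hx0|Hx0].
  - assert (y t0 < 0) by nra.
    destruct (competitive_quadrant_invariant x y A B C D K t0 Hx Hy HB HC HA HD
                Hx0 ltac:(assumption) t Ht).
    nra.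
  - assert (Hx' : forall t, is_derive (fun s => - x s) t (A t * - x t + B t * - y t)).
    { intros s. replace (A s * - x s + B s * - y s) with (- (A s * x s + B s * y s)) by ring.
      exact (is_derive_Ropp x s _ (Hx s)). }
    assert (Hy' : forall t, is_derive (fun s => - y s) t (C t * - x t + D t * - y t)).
    { intros s. replace (C s * - x s + D s * - y s) with (- (C s * x s + D s * y s)) by ring.
      exact (is_derive_Ropp y s _ (Hy s)). }
    assert (x t0 < 0) by (destruct Hx0; [assumption|nra]).
    destruct (competitive_quadrant_invariant _ _ A B C D K t0 Hx' Hy' HB HC HA HD
                ltac:(lra) ltac:(nra) t Ht).
    nra.
Qed.

Lemma gronwall_zero (E dE : R -> R) (K : R) :
  (forall t, is_derive E t (dE t)) -> (forall t, 0 <= E t) ->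
  (forall t, Rabs (dE t) <= K * E t) ->
  forall s0, E s0 = 0 -> forall t, E t = 0.
Proof.
  intros HE Hpos Hbound s0 Hs0 t.
  assert (Hexp : forall a, 0 < exp a) by apply exp_pos.
  assert (Hbetween : forall c, - (K * E c) <= dE c <= K * E c)
    by (intros c; apply Rabs_le_between, Hbound).
  (* E e^(-Kt) is nonincreasing and E e^(Kt) is nondecreasing. *)
  apply Rle_antisym; [|apply Hpos].
  destruct (Rle_or_lt s0 t) as [Hst|Hts].
  - assert (Hmono : - E s0 * exp (- K * s0) <= - E t * exp (- K * t)).
    { apply (derive_nonneg_le _ _ s0 t
               (fun s => is_derive_mul_exp _ s _ (- K) (is_derive_Ropp E s _ (HE s))) Hst).
      intros c _. apply Rmult_le_pos; [|left; apply Hexp].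
      pose proof (Hbetween c). lra. }
    rewrite Hs0 in Hmono. pose proof (Hexp (- K * t)). nra.
  - assert (Hmono : E t * exp (K * t) <= E s0 * exp (K * s0)).
    { apply (derive_nonneg_le _ _ t s0
               (fun s => is_derive_mul_exp _ s _ K (HE s)) (Rlt_le _ _ Hts)).
      intros c _. apply Rmult_le_pos; [|left; apply Hexp].
      pose proof (Hbetween c). lra. }
    rewrite Hs0 in Hmono. pose proof (Hexp (K * t)). nra.
Qed.

Lemma Rabs_energy_derivative_le (A B C D L x y : R) :
  Rabs A <= L -> Rabs B <= L -> Rabs C <= L -> Rabs D <= L ->
  Rabs (2 * x * (A * x + B * y) + 2 * y * (C * x + D * y)) <= 4 * L * (x ^ 2 + y ^ 2).
Proof.
  intros HA HB HC HD.
  apply Rabs_le_between in HA, HB, HC, HD.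
  apply Rabs_le_between.
  assert (0 <= (x + y) ^ 2) by apply pow2_ge_0.
  assert (0 <= (x - y) ^ 2) by apply pow2_ge_0.
  split; nra.
Qed.

Lemma is_derive_energy (x y : R -> R) (t dx dy : R) :
  is_derive x t dx -> is_derive y t dy ->
  is_derive (fun s => x s ^ 2 + y s ^ 2) t (2 * x t * dx + 2 * y t * dy).
Proof.
  intros Hx Hy. auto_derive.
  - split; [now exists dx|split; [now exists dy|exact I]].
  - replace (Derive (fun s => x s) t) with dx by (symmetry; now apply is_derive_unique).
    replace (Derive (fun s => y s) t) with dy by (symmetry; now apply is_derive_unique).
    ring.
Qed.

Section PeriodicOrbit.

Variables (a1 a2 b1 b2 c1 c2 f T : R) (u v : R -> R).
Hypotheses (ha1 : 0 < a1) (ha2 : 0 < a2) (hb1 : 0 < b1) (hb2 : 0 < b2)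
  (hc1 : 0 < c1) (hc2 : 0 < c2) (hf : 0 <= f).
Hypothesis Hsol : is_solution a1 a2 b1 b2 c1 c2 f u v.
Hypothesis Hquad : in_quadrant u v.
Hypothesis HT : 0 < T.
Hypothesis Hper : forall t, u (t + T) = u t /\ v (t + T) = v t.

Definition vel_u t := rhs_u a1 b1 c1 f (u t) (v t).
Definition vel_v t := rhs_v a2 b2 c2 (u t) (v t).

(* Partial derivatives of (rhs_u, rhs_v) with respect to (u, v) along the orbit. *)
Definition jac_uu t := a1 / (1 + f * v t) - 2 * b1 * u t - c1 * v t.
Definition jac_uv t := - u t * (a1 * f / (1 + f * v t) ^ 2 + c1).
Definition jac_vu t := - c2 * v t.
Definition jac_vv t := a2 - 2 * b2 * v t - c2 * u t.

Lemma derive_u t : is_derive u t (vel_u t).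
Proof. exact (proj1 (Hsol t)). Qed.

Lemma derive_v t : is_derive v t (vel_v t).
Proof. exact (proj2 (Hsol t)). Qed.

Lemma vel_u_derive t : is_derive vel_u t (jac_uu t * vel_u t + jac_uv t * vel_v t).
Proof.
  assert (Hfv : 0 <= f * v t) by (apply Rmult_le_pos; [exact hf|apply Hquad]).
  pose proof (derive_u t) as Hu. pose proof (derive_v t) as Hv.
  unfold jac_uu, jac_uv. unfold vel_u at 1; unfold rhs_u. auto_derive.
  - repeat split; try (now exists (vel_u t)); try (now exists (vel_v t)). lra.
  - replace (Derive (fun s => u s) t) with (vel_u t) by (symmetry; now apply is_derive_unique).
    replace (Derive (fun s => v s) t) with (vel_v t) by (symmetry; now apply is_derive_unique).
    field. lra.
Qed.

Lemma vel_v_derive t : is_derive vel_v t (jac_vu t * vel_u t + jac_vv t * vel_v t).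
Proof.
  pose proof (derive_u t) as Hu. pose proof (derive_v t) as Hv.
  unfold jac_vu, jac_vv. unfold vel_v at 1; unfold rhs_v. auto_derive.
  - repeat split; try (now exists (vel_u t)); now exists (vel_v t).
  - replace (Derive (fun s => u s) t) with (vel_u t) by (symmetry; now apply is_derive_unique).
    replace (Derive (fun s => v s) t) with (vel_v t) by (symmetry; now apply is_derive_unique).
    ring.
Qed.

Lemma jac_uv_nonpos t : jac_uv t <= 0.
Proof.
  destruct (Hquad t) as [Hu Hv]. unfold jac_uv.
  assert (0 <= a1 * f / (1 + f * v t) ^ 2).
  { apply Rdiv_le_0_compat; [nra|]. apply pow_lt. nra. }
  nra.
Qed.

Lemma jac_vu_nonpos t : jac_vu t <= 0.
Proof. destruct (Hquad t). unfold jac_vu. nra. Qed.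

Lemma jacobian_bounded : exists L, forall t,
  Rabs (jac_uu t) <= L /\ Rabs (jac_uv t) <= L /\
  Rabs (jac_vu t) <= L /\ Rabs (jac_vv t) <= L.
Proof.
  destruct (periodic_attains_max u T HT (fun t => proj1 (Hper t))
              (fun t => is_derive_continuity_pt _ _ _ (derive_u t))) as [tu Hmu].
  destruct (periodic_attains_max v T HT (fun t => proj2 (Hper t))
              (fun t => is_derive_continuity_pt _ _ _ (derive_v t))) as [tv Hmv].
  exists (a1 + a2 + (2 * b1 + a1 * f + c1 + c2) * u tu + (c1 + 2 * b2 + c2) * v tv).
  intros t. destruct (Hquad t) as [Hu Hv].
  pose proof (Hmu t). pose proof (Hmv t).
  set (w := / (1 + f * v t)).
  assert (Hw : 0 < w <= 1).
  { unfold w. split; [apply Rinv_0_lt_compat; nra|].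
    rewrite <- Rinv_1. apply Rinv_le_contravar; nra. }
  assert (Haf : 0 <= a1 * f) by nra.
  assert (0 <= w ^ 2 <= 1) by (split; nra).
  assert (0 <= a1 * f * w ^ 2 <= a1 * f) by (split; nra).
  assert (0 <= u t * (a1 * f * w ^ 2 + c1) <= u tu * (a1 * f + c1)) by (split; nra).
  assert (0 <= b1 * u t <= b1 * u tu) by (split; nra).
  assert (0 <= c1 * v t <= c1 * v tv) by (split; nra).
  assert (0 <= b2 * v t <= b2 * v tv) by (split; nra).
  assert (0 <= c2 * v t <= c2 * v tv) by (split; nra).
  assert (0 <= c2 * u t <= c2 * u tu) by (split; nra).
  unfold jac_uu, jac_uv, jac_vu, jac_vv, Rdiv. rewrite <- pow_inv. fold w.
  repeat split; apply Rabs_le_between; split; nra.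
Qed.

Lemma velocity_product_nonneg s : 0 <= vel_u s * vel_v s.
Proof.
  destruct jacobian_bounded as [L HL].
  assert (Huu : forall t, - L <= jac_uu t)
    by (intros t; destruct (HL t) as [H _]; apply Rabs_le_between in H; lra).
  assert (Hvv : forall t, - L <= jac_vv t)
    by (intros t; destruct (HL t) as [_ [_ [_ H]]]; apply Rabs_le_between in H; lra).
  apply Rnot_lt_le. intros Hneg.
  (* Otherwise vel_u keeps the sign of vel_u s from time s on, so u is eventually monotone. *)
  apply (periodic_derive_not_eventually_pos (fun t => vel_u s * u t)
           (fun t => vel_u s * vel_u t) T s HT).
  - intros t. now rewrite (proj1 (Hper t)).
  - intros t. apply is_derive_scal, derive_u.
  - exact (competitive_sign_persistent _ _ _ _ _ _ L s vel_u_derive vel_v_derive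
             jac_uv_nonpos jac_vu_nonpos Huu Hvv Hneg).
Qed.

Lemma velocity_vanishes_somewhere : exists s, vel_u s = 0 /\ vel_v s = 0.
Proof.
  destruct (periodic_attains_max v T HT (fun t => proj2 (Hper t))
              (fun t => is_derive_continuity_pt _ _ _ (derive_v t))) as [tv Hmax].
  pose proof (is_derive_max_eq0 v tv _ (derive_v tv) Hmax) as Hv0.
  destruct (Rlt_or_le 0 (v tv)) as [Hvpos|Hvzero].
  - (* vel_u * vel_v >= 0 is minimal at tv, where its derivative is jac_vu tv * vel_u tv ^ 2. *)
    exists tv. split; [|exact Hv0].
    assert (Hmin : forall s, vel_u tv * vel_v tv <= vel_u s * vel_v s)
      by (intros s; rewrite Hv0, Rmult_0_r; apply velocity_product_nonneg).
    pose proof (is_derive_min_eq0 _ tv _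
                  (is_derive_mult vel_u vel_v tv _ _ (vel_u_derive tv) (vel_v_derive tv) Rmult_comm)
                  Hmin) as Hcrit.
    unfold plus, mult in Hcrit; simpl in Hcrit.
    rewrite Hv0 in Hcrit. unfold jac_vu in Hcrit.
    assert (Hsq : (c2 * v tv) * (vel_u tv * vel_u tv) = 0) by lra.
    apply Rmult_integral in Hsq as [Hcv|Hsq]; [nra|].
    now apply Rmult_integral in Hsq as [|].
  - assert (Hvz : forall t, v t = 0)
      by (intros t; pose proof (Hmax t); pose proof (proj2 (Hquad t)); lra).
    destruct (periodic_attains_max u T HT (fun t => proj1 (Hper t))
                (fun t => is_derive_continuity_pt _ _ _ (derive_u t))) as [tu Hmu].
    exists tu. split; [exact (is_derive_max_eq0 u tu _ (derive_u tu) Hmu)|].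
    unfold vel_v, rhs_v. rewrite Hvz. ring.
Qed.

Lemma velocity_vanishes t : vel_u t = 0 /\ vel_v t = 0.
Proof.
  destruct velocity_vanishes_somewhere as [s0 [Hu0 Hv0]].
  destruct jacobian_bounded as [L HL].
  assert (HE : vel_u t ^ 2 + vel_v t ^ 2 = 0).
  { refine (gronwall_zero (fun s => vel_u s ^ 2 + vel_v s ^ 2) _ (4 * L)
             (fun s => is_derive_energy _ _ s _ _ (vel_u_derive s) (vel_v_derive s)) _ _ s0 _ t).
    - intros s. nra.
    - intros s. destruct (HL s) as [? [? [? ?]]]. now apply Rabs_energy_derivative_le.
    - rewrite Hu0, Hv0. ring. }
  split; nra.
Qed.

Lemma periodic_solution_constant t1 t2 : u t1 = u t2 /\ v t1 = v t2.
Proof.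
  split; apply derive_zero_const; intros t.
  - rewrite <- (proj1 (velocity_vanishes t)). apply derive_u.
  - rewrite <- (proj2 (velocity_vanishes t)). apply derive_v.
Qed.

End PeriodicOrbit.

Theorem mainTheorem10 (a1 a2 b1 b2 c1 c2 f : R) :
  0 < a1 -> 0 < a2 -> 0 < b1 -> 0 < b2 -> 0 < c1 -> 0 < c2 -> 0 <= f ->
  forall u v : R -> R,
    in_quadrant u v -> ~ is_periodic_orbit a1 a2 b1 b2 c1 c2 f u v.
Proof.
  intros ha1 ha2 hb1 hb2 hc1 hc2 hf u v Hquad [Hsol [[T [HT Hper]] [t1 [t2 Hnonconst]]]].
  destruct (periodic_solution_constant a1 a2 b1 b2 c1 c2 f T u v
              ha1 ha2 hb1 hb2 hc1 hc2 hf Hsol Hquad HT Hper t1 t2).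
  tauto.
Qed.
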